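(* Let $G_1$ and $G_2$ be two vertex-disjoint simple connected graphs with $|V(G_1)|=n_1$, $|V(G_2)|=n_2$, $|E(G_1)|=m_1$, $|E(G_2)|=m_2$. Then the edge T-join $G_1\underline{\vee}_T G_2$ satisfies \[ F(G_1\underline{\vee}_T G_2)=8F(G_1)+F(G_2)+3n_2^{2}M_1(G_1)+3m_1M_1(G_2)+M_4(G_1)+3n_2\,HM(G_1)+3\,ReZM(G_1)+m_1^{2}(6m_2+m_1n_2)+m_1n_2^{3}. \]
   Context: For a simple graph $G$ and $v\in V(G)$, $d_G(v)$ is the degree of $v$. Define $M_1(G)=\sum_{v\in V(G)}d_G(v)^2$, $F(G)=\sum_{v\in V(G)}d_G(v)^3$, $M_4(G)=\sum_{v\in V(G)}d_G(v)^4$, $HM(G)=\sum_{uv\in E(G)}[d_G(u)+d_G(v)]^2$, and $ReZM(G)=\sum_{uv\in E(G)}d_G(u)d_G(v)\,[d_G(u)+d_G(v)]$. The total graph $T(G)$ is obtained from $G$ (keeping all edges of $G$) by inserting a new vertex for each edge of $G$, joining each new vertex to the two end vertices of its edge, and joining by an edge each pair of new vertices corresponding to adjacent edges of $G$ (edges sharing an end vertex); let $I(G)$ denote the set of these new vertices, so $V(T(G))=V(G)\cup I(G)$. The edge T-join $G_1\underline{\vee}_T G_2$ is the graph obtained from $T(G_1)$ and $G_2$ (taken vertex-disjoint) by joining each vertex of $I(G_1)$ to every vertex of $G_2$ by an edge. *)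

From mathcomp Require Import all_boot.
Set Implicit Arguments. Unset Strict Implicit. Unset Printing Implicit Defensive.

Record sgraph := SGraph {
  vert :> finType;
  adj : rel vert;
  adj_sym : symmetric adj;
  adj_irr : irreflexive adj }.

Definition connected (G : sgraph) : Prop := forall u v : G, connect (@adj G) u v.

Definition deg (G : sgraph) (v : G) : nat := #|[set w | adj v w]|.

Definition edges (G : sgraph) : {set {set G}} :=
  [set [set u; v] | u in G, v in G & adj u v].

Definition M1 (G : sgraph) : nat := \sum_(v : G) deg v ^ 2.
Definition Fidx (G : sgraph) : nat := \sum_(v : G) deg v ^ 3.
Definition M4 (G : sgraph) : nat := \sum_(v : G) deg v ^ 4.
Definition HM (G : sgraph) : nat :=
  \sum_(e in edges G) (\sum_(x in e) deg x) ^ 2.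
Definition ReZM (G : sgraph) : nat :=
  \sum_(e in edges G) (\prod_(x in e) deg x) * (\sum_(x in e) deg x).

(* the type of edges of G (used as the new vertices I(G) of T(G)) *)
Definition edge_t (G : sgraph) : finType := {e : {set G} | e \in edges G}.

(* vertex set of the edge T-join: (V(G1) + I(G1)) + V(G2) *)
Definition tjoin_vert (G1 G2 : sgraph) : finType := ((G1 + edge_t G1) + G2)%type.

Definition tjoin_adj (G1 G2 : sgraph) : rel (tjoin_vert G1 G2) :=
  fun x y =>
  match x, y with
  | inl (inl u), inl (inl v) => adj u v
  | inl (inl u), inl (inr e) => u \in val e
  | inl (inr e), inl (inl u) => u \in val e
  | inl (inr e), inl (inr f) => (e != f) && (val e :&: val f != set0) (* adjacent edges *)
  | inl (inr _), inr _ => true                                (* I(G1) joined to V(G2) *)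
  | inr _, inl (inr _) => true
  | inr w, inr w' => adj w w'
  | _, _ => false
  end.

Lemma tjoin_adj_sym G1 G2 : symmetric (@tjoin_adj G1 G2).
Proof.
move=> [[u|e]|w] [[v|f]|w'] //=; try exact: adj_sym.
by rewrite eq_sym setIC.
Qed.

Lemma tjoin_adj_irr G1 G2 : irreflexive (@tjoin_adj G1 G2).
Proof. by move=> [[u|e]|w] //=; rewrite ?adj_irr ?eqxx. Qed.

Definition edge_tjoin (G1 G2 : sgraph) : sgraph :=
  SGraph (@tjoin_adj_sym G1 G2) (@tjoin_adj_irr G1 G2).

From mathcomp Require Import all_boot ring.

(* In the edge T-join a vertex [u] of [G1] has degree [2 d(u)] (its neighbours
   and its incident edges), the vertex of an edge [uv] has degree
   [d(u) + d(v) + n2] (its two ends, the [d(u) + d(v) - 2] edges sharing an end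
   with it, and all of [G2]), and a vertex [w] of [G2] has degree [d(w) + m1].
   Expanding the cubes binomially, every sum over edges of a function of the
   endpoints becomes a vertex sum through [sum_(uv) (f u + f v) = sum_v d(v) f(v)],
   and [sum_w d(w) = 2 m2]. *)

Lemma cube_sum_pair (T : finType) (e : {set T}) (f : T -> nat) (n : nat) :
  #|e| = 2 ->
  (\sum_(x in e) f x + n) ^ 3 =
    \sum_(x in e) f x ^ 3 + 3 * ((\prod_(x in e) f x) * \sum_(x in e) f x)
    + 3 * n * (\sum_(x in e) f x) ^ 2 + 3 * n ^ 2 * \sum_(x in e) f x + n ^ 3.
Proof.
move/eqP/cards2P=> [a [b [nab ->]]].
rewrite !big_setU1 ?in_set1 //= !big_set1; ring.
Qed.

Section EdgeCounting.
Variable G : sgraph.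
Implicit Types (u v : G) (e f : {set G}).

Lemma edgeP e : reflect (exists u v, adj u v /\ e = [set u; v]) (e \in edges G).
Proof.
apply: (iffP imset2P) => [[u v _]|[u [v [uv ->]]]].
  by rewrite inE => uv ->; exists u, v.
by apply: (Imset2spec (x1 := u) (x2 := v)); rewrite ?inE.
Qed.

Lemma adj_neq {u v} : adj u v -> u != v.
Proof. by apply: contraTneq => ->; rewrite adj_irr. Qed.

Lemma card_edge {e} : e \in edges G -> #|e| = 2.
Proof. by case/edgeP=> u [v [uv ->]]; rewrite cards2 adj_neq. Qed.

Lemma deg_sum_adj u : deg u = \sum_v adj u v.
Proof. by rewrite /deg -big_mkcond sum1_card; apply: eq_card => v; rewrite inE. Qed.

Lemma deg_sum_edges u : deg u = \sum_(e in edges G) (u \in e).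
Proof.
rewrite -big_mkcondr sum1_card /deg -(@card_in_imset _ _ (fun v => [set u; v])).
  apply: eq_card => e; rewrite unfold_in /=.
  apply/imsetP/andP => [[v]|[/edgeP [a [b [ab ->]]]]].
    by rewrite inE => uv ->; rewrite !inE eqxx; split=> //; apply/edgeP; exists u, v.
  rewrite !inE => /orP [/eqP ->|/eqP ->]; first by exists b; rewrite ?inE.
  by exists a; rewrite 1?setUC // inE adj_sym.
move=> v w; rewrite !inE => uv uw vw.
have : w \in [set u; v] by rewrite vw !inE eqxx orbT.
by rewrite !inE eq_sym (negbTE (adj_neq uw)) orFb => /eqP.
Qed.

Lemma handshake (F : G -> nat) :
  \sum_(e in edges G) \sum_(x in e) F x = \sum_v deg v * F v.
Proof.
under eq_bigr do rewrite big_mkcond /=.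
rewrite exchange_big; apply: eq_bigr => v _.
rewrite deg_sum_edges big_distrl; apply: eq_bigr => e _.
by case: (v \in e); rewrite /= ?mul1n.
Qed.

Lemma sum_deg : \sum_(v : G) deg v = 2 * #|edges G|.
Proof.
rewrite mulnC -sum_nat_const.
transitivity (\sum_(e in edges G) \sum_(x in e) 1).
  by rewrite handshake; apply: eq_bigr => v _; rewrite muln1.
by apply: eq_bigr => e Ee; rewrite sum1_card card_edge.
Qed.

Lemma card_edgeI_le1 {e f} :
  e \in edges G -> f \in edges G -> e != f -> #|e :&: f| <= 1.
Proof.
move=> Ee Ef; apply: contraR; rewrite -ltnNge => gt1.
have le2 : #|e :&: f| <= 2 by rewrite -(card_edge Ee) subset_leq_card ?subsetIl.
have eqI A : A \in edges G -> e :&: f \subset A -> e :&: f = A.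
  by move=> EA sub; apply/eqP; rewrite eqEcard sub card_edge // eqn_leq le2 gt1.
by rewrite -(eqI e) ?subsetIl // (eqI f) ?subsetIr.
Qed.

(* The degree of [e] in the line graph of [G] is [d(u) + d(v) - 2]. *)
Lemma sum_deg_edge {e} : e \in edges G ->
  \sum_(x in e) deg x = \sum_(f in edges G) ((e != f) && (e :&: f != set0)) + 2.
Proof.
move=> Ee.
have cardI f : f \in edges G ->
    #|e :&: f| = ((e != f) && (e :&: f != set0)) + 2 * (e == f).
  move=> Ef; have [<-|nef] := eqVneq e f; first by rewrite setIid card_edge.
  rewrite muln0 addn0 /= -card_gt0.
  by case: #|_| (card_edgeI_le1 Ee Ef nef) => [|[]].
under eq_bigr do rewrite deg_sum_edges.
rewrite exchange_big /= -[2 in RHS](card_edge Ee).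
have -> : #|e| = \sum_(f in edges G) 2 * (e == f).
  rewrite (bigD1 e) //= eqxx big1 ?card_edge // => f /andP [_ /negbTE].
  by rewrite eq_sym => ->.
rewrite -big_split /=; apply: eq_bigr => f Ef.
by rewrite -cardI // -big_mkcondr sum1_card; apply: eq_card => x; rewrite !inE.
Qed.

Lemma sum_edges_cube n :
  \sum_(e in edges G) (\sum_(x in e) deg x + n) ^ 3 =
    M4 G + 3 * ReZM G + 3 * n * HM G + 3 * n ^ 2 * M1 G + #|edges G| * n ^ 3.
Proof.
have sum_edges_pow k :
    \sum_(e in edges G) \sum_(x in e) deg x ^ k = \sum_(v : G) deg v ^ k.+1.
  by rewrite handshake; apply: eq_bigr => v _; rewrite expnS.
rewrite /M4 /ReZM /HM /M1 -!sum_edges_pow !big_distrr -sum_nat_const -!big_split.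
by apply: eq_bigr => e Ee; rewrite cube_sum_pair ?card_edge.
Qed.

Lemma sum_deg_shift_cube m :
  \sum_(v : G) (deg v + m) ^ 3 =
    Fidx G + 3 * m * M1 G + 6 * m ^ 2 * #|edges G| + #|G| * m ^ 3.
Proof.
have -> : 6 * m ^ 2 * #|edges G| = 3 * m ^ 2 * \sum_(v : G) deg v.
  by rewrite sum_deg; ring.
rewrite /Fidx /M1 !big_distrr -sum_nat_const -!big_split /=.
by apply: eq_bigr => v _; ring.
Qed.

End EdgeCounting.

Section EdgeTJoin.
Variables G1 G2 : sgraph.
Local Notation T := (edge_tjoin G1 G2).

Lemma deg_tjoin_vert1 (u : G1) : deg (inl (inl u) : T) = 2 * deg u.
Proof.
rewrite deg_sum_adj !big_sumType /= -deg_sum_adj.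
rewrite -(big_sub _ (fun e : {set G1} => (u \in e : nat))) -deg_sum_edges.
by rewrite big1 // addn0 mul2n addnn.
Qed.

Lemma deg_tjoin_edge (e : edge_t G1) :
  deg (inl (inr e) : T) = \sum_(x in val e) deg x + #|G2|.
Proof.
rewrite deg_sum_adj !big_sumType /= -big_mkcond sum1_card sum1_card.
rewrite (card_edge _ (valP e)) (sum_deg_edge _ (valP e)) (big_sub (edges G1)) /=.
under [in RHS]eq_bigr do rewrite (inj_eq val_inj).
by rewrite (addnC 2).
Qed.

Lemma deg_tjoin_vert2 (w : G2) : deg (inr w : T) = deg w + #|edges G1|.
Proof.
rewrite deg_sum_adj !big_sumType /= -deg_sum_adj big1 // add0n sum1_card card_sig.
by rewrite addnC; congr (_ + _); apply: eq_card.
Qed.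

Lemma Fidx_edge_tjoin :
  Fidx T = 8 * Fidx G1 + \sum_(e in edges G1) (\sum_(x in e) deg x + #|G2|) ^ 3
           + \sum_(w : G2) (deg w + #|edges G1|) ^ 3.
Proof.
rewrite /Fidx !big_sumType /= big_distrr (big_sub (edges G1)) /=.
congr (_ + _ + _); apply: eq_bigr => x _.
- by rewrite deg_tjoin_vert1 expnMn.
- by rewrite deg_tjoin_edge.
- by rewrite deg_tjoin_vert2.
Qed.

End EdgeTJoin.

Theorem theorem8 (G1 G2 : sgraph) :
  connected G1 -> connected G2 ->
  let n1 := #|G1| in let n2 := #|G2| in
  let m1 := #|edges G1| in let m2 := #|edges G2| in
  Fidx (edge_tjoin G1 G2) =
    8 * Fidx G1 + Fidx G2 + 3 * n2 ^ 2 * M1 G1 + 3 * m1 * M1 G2 + M4 G1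
    + 3 * n2 * HM G1 + 3 * ReZM G1 + m1 ^ 2 * (6 * m2 + m1 * n2) + m1 * n2 ^ 3.
Proof.
move=> _ _ n1 n2 m1 m2.
rewrite Fidx_edge_tjoin sum_edges_cube sum_deg_shift_cube.
rewrite /n2 /m1 /m2; ring.
Qed.
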